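(* Let $\{(\mathcal X^k, P_{Y_k|X_{[k]}}, \mathcal Y_k)\}_{k=0}^K$ be a RAC satisfying permutation-invariance and reducibility. Let $P_X$ be an input distribution under which friendliness and interference hold, and let $X_1,X_2,\dots$ be i.i.d. $P_X$. Then for all integers $1\le s<k\le K$, $$\frac{I_k}{k}<\frac{I_s}{s}.$$
   Context: A RAC is a family of stationary memoryless multiple access channels $\{(\mathcal X^k, P_{Y_k|X_{[k]}}(y_k|x_{[k]}), \mathcal Y_k)\}_{k=0}^K$, $K\le\infty$. The $k$-th channel has $k$ inputs, each taking values in a common alphabet $\mathcal X$ that contains a distinguished ''silence'' symbol $0$, and it has output alphabet $\mathcal Y_k$. Write $[k]=\{1,\dots,k\}$ and $[i:j]=\{i,\dots,j\}$. Permutation-invariance: for every $k$ and every permutation $\hat x_{[k]}$ of $x_{[k]}$, $P_{Y_k|X_{[k]}}(y|x_{[k]})=P_{Y_k|X_{[k]}}(y|\hat x_{[k]})$. Reducibility: for all $s<k$, all $x_{[s]}\in\mathcal X^s$ and all $y\in\mathcal Y_s$, $P_{Y_s|X_{[s]}}(y|x_{[s]})=P_{Y_k|X_{[k]}}(y|x_{[s]},0^{k-s})$. Given $P_X$, let $X_1,\dots,X_k$ be i.i.d. $P_X$ and let $Y_k$ be the output of the $k$-th channel. Mutual informations $I_k(X_{\mathcal A};Y_k\mid X_{\mathcal B})$ are computed under this joint law, and $I_k:=I_k(X_{[k]};Y_k)$. Friendliness: for all $s\le k\le K$, $I_k(X_{[s]};Y_k\mid X_{[s+1:k]}=0^{k-s})\ge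 I_k(X_{[s]};Y_k\mid X_{[s+1:k]})$. Interference: for every $k$ and all $1\le s<t\le k$, $P_{X_{[t]}|Y_k}\neq P_{X_{[s]}|Y_k}\cdot P_{X_{[s+1:t]}|Y_k}$, i.e. $X_{[s]}$ and $X_{[s+1:t]}$ are not conditionally independent given $Y_k$. *)

From Stdlib Require Import Reals.
From mathcomp Require Import all_boot all_fingroup.

Set Implicit Arguments.
Unset Strict Implicit.
Unset Printing Implicit Defensive.

Local Open Scope R_scope.

Section RAC.
Variables (X : finType) (Y : eqType).

Definition inp (k : nat) := {ffun 'I_k -> X}.

(* A channel family: W k x y = P_{Y_k|X_[k]}(y | x); Ysupp k = output alphabet Y_k. *)
Definition chan := forall k : nat, inp k -> Y -> R.

Definition sumX k (F : inp k -> R) : R := \big[Rplus/0]_(x : inp k) F x.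
Definition sumY (Ys : seq Y) (F : Y -> R) : R := \big[Rplus/0]_(y <- Ys) F y.

Definition is_dist (PX : X -> R) : Prop :=
  (forall a, 0 <= PX a) /\ \big[Rplus/0]_(a : X) PX a = 1.

Definition is_RAC (Ysupp : nat -> seq Y) (W : chan) : Prop :=
  forall k, uniq (Ysupp k) /\
    forall x : inp k,
      (forall y, 0 <= W k x y) /\
      (forall y, y \notin Ysupp k -> W k x y = 0) /\
      sumY (Ysupp k) (W k x) = 1.

(* K <= infinity: None = infinity. *)
Definition inK (K : option nat) (k : nat) : Prop :=
  match K with Some n => (k <= n)%N | None => True end.

Definition perm_invariant (K : option nat) (W : chan) : Prop :=
  forall k, inK K k -> forall (sigma : {perm 'I_k}) (x : inp k) (y : Y),
    W k [ffun i => x (sigma i)] y = W k x y.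

(* (x_[s], 0^{k-s}) as an element of X^k. *)
Definition pad (x0 : X) (s k : nat) (x : inp s) : inp k :=
  [ffun i : 'I_k => if @insub nat (fun n => (n < s)%N) 'I_s (val i) is Some j
                    then x j else x0].

Definition reducible (K : option nat) (x0 : X) (Ysupp : nat -> seq Y) (W : chan) : Prop :=
  forall s k, (s < k)%N -> inK K k -> forall (x : inp s) (y : Y), y \in Ysupp s ->
    W s x y = W k (pad x0 k x) y.

Definition law (PX : X -> R) (W : chan) k (x : inp k) (y : Y) : R :=
  (\big[Rmult/1]_(i : 'I_k) PX (x i)) * W k x y.

(* Conditional law of (X_[k], Y_k) given X_B = b_B.  Since the inputs are
   independent this is prod_{i notin B} P_X(x_i) * 1[x_B = b_B] * W(y|x). *)
Definition claw (PX : X -> R) (W : chan) k (B : pred 'I_k) (b : inp k)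
  (x : inp k) (y : Y) : R :=
  (\big[Rmult/1]_(i : 'I_k | ~~ B i) PX (x i)) *
  (if [forall i, B i ==> (x i == b i)] then 1 else 0) * W k x y.

Variable Ysupp : nat -> seq Y.

Definition Ex k (L : inp k -> Y -> R) (F : inp k -> Y -> R) : R :=
  sumX (fun x => sumY (Ysupp k) (fun y => L x y * F x y)).
Definition Pr k (L : inp k -> Y -> R) (E : inp k -> Y -> bool) : R :=
  Ex L (fun x y => if E x y then 1 else 0).

Definition MI k (L : inp k -> Y -> R) (U V : eqType)
  (f : inp k -> Y -> U) (g : inp k -> Y -> V) : R :=
  Ex L (fun x y =>
    ln (Pr L (fun x' y' => (f x' y' == f x y) && (g x' y' == g x y)) /
        (Pr L (fun x' y' => f x' y' == f x y) * Pr L (fun x' y' => g x' y' == g x y)))).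

Definition CMI k (L : inp k -> Y -> R) (U V Z : eqType)
  (f : inp k -> Y -> U) (g : inp k -> Y -> V) (h : inp k -> Y -> Z) : R :=
  Ex L (fun x y =>
    ln (Pr L (fun x' y' => [&& f x' y' == f x y, g x' y' == g x y & h x' y' == h x y]) *
        Pr L (fun x' y' => h x' y' == h x y) /
        (Pr L (fun x' y' => (f x' y' == f x y) && (h x' y' == h x y)) *
         Pr L (fun x' y' => (g x' y' == g x y) && (h x' y' == h x y))))).

(* X_{[a+1:b]} = (X_{a+1},...,X_b) (1-based), i.e. indices a <= i < b (0-based). *)
Definition Xrange k (a b : nat) (x : inp k) (_ : Y) : seq X :=
  [seq x i | i <- enum 'I_k & (a <= val i < b)%N].
Definition Yout k (_ : inp k) (y : Y) : Y := y.

Definition Ik (PX : X -> R) (W : chan) (k : nat) : R :=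
  MI (law PX W (k:=k)) (Xrange 0 k) (@Yout k).

Definition friendly (K : option nat) (x0 : X) (PX : X -> R) (W : chan) : Prop :=
  forall s k, (s <= k)%N -> inK K k ->
    MI (claw PX W (fun i : 'I_k => (s <= val i)%N) [ffun => x0]) (Xrange 0 s) (@Yout k)
    >= CMI (law PX W (k:=k)) (Xrange 0 s) (@Yout k) (Xrange s k).

(* Interference: X_[s] and X_[s+1:t] are not conditionally independent given Y_k. *)
Definition interference (K : option nat) (PX : X -> R) (W : chan) : Prop :=
  forall k s t, inK K k -> (1 <= s)%N -> (s < t)%N -> (t <= k)%N ->
    ~ (forall (x : inp k) (y : Y),
         let L := law PX W (k:=k) in
         let py := Pr L (fun x' y' => y' == y) in
         0 < py ->
         Pr L (fun x' y' => (Xrange 0 t x' y' == Xrange 0 t x y) && (y' == y)) / py =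
         (Pr L (fun x' y' => (Xrange 0 s x' y' == Xrange 0 s x y) && (y' == y)) / py) *
         (Pr L (fun x' y' => (Xrange s t x' y' == Xrange s t x y) && (y' == y)) / py)).

End RAC.

From Stdlib Require Import Reals Lra Lia.
From mathcomp Require Import all_boot all_fingroup.
From HB Require Import structures.
From mathcomp Require Import zify.

(* For [A] a set of input coordinates of the [k]-th channel, let
   [F(|A|) := - H(Y_k | X_A)]; by permutation invariance this depends only on
   [|A|].  The inputs being independent, [A |-> H(X_A)] is modular, while
   [A |-> H(X_A, Y_k)] is submodular by Gibbs' inequality; so [A |-> F(|A|)] is
   supermodular, i.e. [F] is convex.  Gibbs' inequality is strict unless
   [X_[k-1]] and [X_k] are conditionally independent given [Y_k], so
   interference gives [F(k-1) + F(1) < F(k) + F(0)].  Now [I_k = F(k) - F(0)],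
   while friendliness and reducibility give
   [I_s >= I_k(X_[s]; Y_k | X_[s+1:k]) = F(k) - F(k-s)], and strict convexity
   yields [s (F(k) - F(0)) < k (F(k) - F(k-s))]. *)

Set Implicit Arguments.
Unset Strict Implicit.
Unset Printing Implicit Defensive.
Local Open Scope R_scope.

Lemma Rplus_associative : associative Rplus.
Proof. by move=> a b c; rewrite Rplus_assoc. Qed.
Lemma Rmult_associative : associative Rmult.
Proof. by move=> a b c; rewrite Rmult_assoc. Qed.

HB.instance Definition _ :=
  Monoid.isComLaw.Build R 0 Rplus Rplus_associative Rplus_comm Rplus_0_l.
HB.instance Definition _ :=
  Monoid.isComLaw.Build R 1 Rmult Rmult_associative Rmult_comm Rmult_1_l.
HB.instance Definition _ := Monoid.isMulLaw.Build R 0 Rmult Rmult_0_l Rmult_0_r.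
HB.instance Definition _ :=
  Monoid.isAddLaw.Build R Rmult Rplus Rmult_plus_distr_r Rmult_plus_distr_l.

Section RealSums.
Variable T : eqType.
Implicit Types (r : seq T) (F G : T -> R).

Lemma sumRN r F : \big[Rplus/0]_(w <- r) - F w = - \big[Rplus/0]_(w <- r) F w.
Proof. by rewrite (big_morph Ropp Ropp_plus_distr Ropp_0). Qed.

Lemma sumR_le r F G : {in r, forall w, F w <= G w} ->
  \big[Rplus/0]_(w <- r) F w <= \big[Rplus/0]_(w <- r) G w.
Proof.
move=> FG; rewrite big_seq [X in _ <= X]big_seq.
by apply: big_ind2 => [|*|w /FG]; lra.
Qed.

Lemma sumR_ge0 r F : {in r, forall w, 0 <= F w} -> 0 <= \big[Rplus/0]_(w <- r) F w.
Proof. by move=> F0; rewrite big_seq; apply: big_ind => [|*|w /F0]; lra. Qed.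

Lemma sumR_lt r F G : {in r, forall w, F w <= G w} ->
  (exists2 w, w \in r & F w < G w) ->
  \big[Rplus/0]_(w <- r) F w < \big[Rplus/0]_(w <- r) G w.
Proof.
elim: r => [|a r IH] FG [w]; rewrite ?in_nil // in_cons !big_cons.
have FGa := FG a (mem_head a r).
have FGr : {in r, forall w, F w <= G w} by move=> v vr; apply: FG; rewrite in_cons vr orbT.
case/orP=> [/eqP-> lt_a | wr lt_w]; first by have := sumR_le FGr; lra.
by have := IH FGr (ex_intro2 _ _ w wr lt_w); lra.
Qed.

Lemma sumR_le_eq r F G : {in r, forall w, F w <= G w} ->
  \big[Rplus/0]_(w <- r) G w <= \big[Rplus/0]_(w <- r) F w ->
  {in r, forall w, F w = G w}.
Proof.
move=> FG leGF w wr; case: (Rle_lt_or_eq_dec _ _ (FG w wr)) => // lt_w.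
by have := sumR_lt FG (ex_intro2 _ _ w wr lt_w); lra.
Qed.

Lemma sumR_ge_term r F w : {in r, forall v, 0 <= F v} -> w \in r ->
  F w <= \big[Rplus/0]_(v <- r) F v.
Proof.
elim: r => [|a r IH] F0 // wr; rewrite in_cons big_cons in wr *.
have F0r : {in r, forall v, 0 <= F v} by move=> v vr; apply: F0; rewrite in_cons vr orbT.
have := F0 a (mem_head a r); have := sumR_ge0 F0r.
by case/orP: wr => [/eqP->|/(IH F0r)]; lra.
Qed.

Lemma sumR_neq0 r F : \big[Rplus/0]_(w <- r) F w <> 0 -> exists2 w, w \in r & F w <> 0.
Proof.
elim: r => [|a r IH]; rewrite ?big_nil ?big_cons // => sum_neq0.
case: (Req_dec (F a) 0) => [Fa0|]; last by exists a; rewrite ?mem_head.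
have [|w wr Fw] := IH; first lra.
by exists w; rewrite // in_cons wr orbT.
Qed.

End RealSums.

Definition indic (b : bool) : R := if b then 1 else 0.

Lemma indic_ge0 b : 0 <= indic b.
Proof. by case: b => /=; lra. Qed.

Lemma ln_le_sub1 t : 0 < t -> ln t <= t - 1.
Proof. by move=> t_gt0; have := exp_ineq1_le (ln t); rewrite exp_ln //; lra. Qed.

Lemma ln_lt_sub1 t : 0 < t -> t <> 1 -> ln t < t - 1.
Proof.
move=> t_gt0 t_neq1; have := exp_ineq1 _ (ln_neq_0 _ t_neq1 t_gt0).
by rewrite exp_ln //; lra.
Qed.

Lemma Rdiv_factor (p p1 p2 c : R) : 0 < c -> p * c = p1 * p2 -> p / c = p1 / c * (p2 / c).
Proof.
move=> c_gt0 factor; transitivity (p * c / (c * c)); first by field; lra.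
by rewrite factor; field; lra.
Qed.

Lemma Rdiv_lt_cross (a b c d : R) : 0 < b -> 0 < d -> d * a < b * c -> a / b < c / d.
Proof.
move=> b_gt0 d_gt0 lt_cross.
have -> : a / b = d * a / (b * d) by field; lra.
have -> : c / d = b * c / (b * d) by field; lra.
by apply: Rmult_lt_compat_r => //; apply/Rinv_0_lt_compat/Rmult_lt_0_compat.
Qed.

Lemma equivalence_rel_sym T (E : rel T) : equivalence_rel E -> symmetric E.
Proof.
case/equivalence_relP=> Erefl Etrans a b.
by apply/idP/idP => Eab; rewrite -(Etrans _ _ Eab) Erefl.
Qed.

Section Gibbs.
Variables (T : eqType) (r : seq T) (L : T -> R).
Hypothesis L_ge0 : forall w, 0 <= L w.
Implicit Types E : rel T.

(* [mass E w] is the weight of the [E]-class of [w] and, when [L] is a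
   probability, [negent E] is minus the entropy of the partition into
   [E]-classes. *)
Definition mass E w := \big[Rplus/0]_(w' <- r) (L w' * indic (E w w')).
Definition negent E := \big[Rplus/0]_(w <- r) (L w * ln (mass E w)).

Lemma weight_indic_ge0 w b : 0 <= L w * indic b.
Proof. by apply: Rmult_le_pos; [apply: L_ge0 | apply: indic_ge0]. Qed.

Lemma mass_ge0 E w : 0 <= mass E w.
Proof. by apply: sumR_ge0 => w' _; apply: weight_indic_ge0. Qed.

Lemma mass_gt0 E w : E w w -> w \in r -> 0 < L w -> 0 < mass E w.
Proof.
move=> Eww wr Lw_gt0; apply: Rlt_le_trans Lw_gt0 _.
have := sumR_ge_term (F := fun w' => L w' * indic (E w w')) _ wr.
by rewrite /indic Eww Rmult_1_r; apply=> w' _; apply: weight_indic_ge0.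
Qed.

Lemma mass_congr E a b : left_transitive E -> E a b -> mass E a = mass E b.
Proof. by move=> Etrans Eab; apply: eq_bigr => w _; rewrite (Etrans _ _ Eab). Qed.

Lemma mass_gt0_witness E w : 0 < mass E w -> exists2 w', w' \in r & 0 < L w' /\ E w w'.
Proof.
case/Rgt_not_eq/sumR_neq0=> w' w'r neq0; exists w' => //.
rewrite /indic in neq0; case: (E w w') neq0; rewrite ?Rmult_0_r ?Rmult_1_r // => Lw'_neq0.
by split=> //; case: (Rle_lt_or_eq_dec _ _ (L_ge0 w')) => // /esym.
Qed.

Lemma negent_ext E E' : E =2 E' -> negent E = negent E'.
Proof.
by move=> eqE; apply: eq_bigr => w _; congr (_ * ln _); apply: eq_bigr => w' _; rewrite eqE.
Qed.

Section CondInfo.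
Variables E1 E2 Eh : rel T.
Hypotheses (E1_equiv : equivalence_rel E1) (E2_equiv : equivalence_rel E2).
Hypothesis Eh_equiv : equivalence_rel Eh.
Hypotheses (E1h : subrel E1 Eh) (E2h : subrel E2 Eh).

Definition relI : rel T := fun a b => E1 a b && E2 a b.

(* The conditional mutual information of the [E1]- and [E2]-partitions given
   the coarser [Eh]-partition. *)
Definition cond_info := negent relI + negent Eh - negent E1 - negent E2.

Let E1refl : reflexive E1. Proof. by case/equivalence_relP: E1_equiv. Qed.
Let E2refl : reflexive E2. Proof. by case/equivalence_relP: E2_equiv. Qed.
Let Ehrefl : reflexive Eh. Proof. by case/equivalence_relP: Eh_equiv. Qed.
Let E1trans : left_transitive E1. Proof. by case/equivalence_relP: E1_equiv. Qed.
Let E2trans : left_transitive E2. Proof. by case/equivalence_relP: E2_equiv. Qed.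
Let Ehtrans : left_transitive Eh. Proof. by case/equivalence_relP: Eh_equiv. Qed.
Let E1sym := equivalence_rel_sym E1_equiv.
Let E2sym := equivalence_rel_sym E2_equiv.

Let relIrefl : reflexive relI. Proof. by move=> w; rewrite /relI E1refl E2refl. Qed.
Let relItrans : left_transitive relI.
Proof. by move=> a b /andP[/E1trans e1 /E2trans e2] c; rewrite /relI e1 e2. Qed.

Local Notation p := (mass relI).
Local Notation p1 := (mass E1).
Local Notation p2 := (mass E2).
Local Notation ph := (mass Eh).

(* The Gibbs argument compares [ln] of this ratio with [ratio - 1]. *)
Definition cell_ratio w := p1 w * p2 w / (ph w * p w).

Lemma ln_cell_ratio w : w \in r -> 0 < L w ->
  0 < cell_ratio w /\ ln (p1 w) + ln (p2 w) - ln (p w) - ln (ph w) = ln (cell_ratio w).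
Proof.
move=> wr Lw_gt0.
have p_gt0 := mass_gt0 (relIrefl w) wr Lw_gt0; have p1_gt0 := mass_gt0 (E1refl w) wr Lw_gt0.
have p2_gt0 := mass_gt0 (E2refl w) wr Lw_gt0; have ph_gt0 := mass_gt0 (Ehrefl w) wr Lw_gt0.
have php_gt0 : 0 < ph w * p w by apply: Rmult_lt_0_compat.
split; first by apply: Rdiv_lt_0_compat => //; apply: Rmult_lt_0_compat.
rewrite /cell_ratio /Rdiv ln_mult ?ln_Rinv ?ln_mult //; [ring | exact: Rmult_lt_0_compat |].
exact: Rinv_0_lt_compat.
Qed.

Lemma opp_cond_info : - cond_info =
  \big[Rplus/0]_(w <- r) (L w * (ln (p1 w) + ln (p2 w) - ln (p w) - ln (ph w))).
Proof.
rewrite /cond_info /negent [RHS](eq_bigr (fun w => L w * ln (p1 w) + L w * ln (p2 w)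
  + - (L w * ln (p w)) + - (L w * ln (ph w)))); last by move=> w _; ring.
by rewrite !big_split !sumRN /=; ring.
Qed.

Lemma cond_info_term_le w : w \in r ->
  L w * (ln (p1 w) + ln (p2 w) - ln (p w) - ln (ph w)) <= L w * cell_ratio w - L w.
Proof.
move=> wr; case: (Rle_lt_or_eq_dec _ _ (L_ge0 w)) => [Lw_gt0|<-]; last lra.
have [ratio_gt0 ->] := ln_cell_ratio wr Lw_gt0.
by have := ln_le_sub1 ratio_gt0; nra.
Qed.

Lemma cond_info_term_eq w : w \in r -> 0 < L w ->
  L w * (ln (p1 w) + ln (p2 w) - ln (p w) - ln (ph w)) = L w * cell_ratio w - L w ->
  cell_ratio w = 1.
Proof.
move=> wr Lw_gt0; have [ratio_gt0 ->] := ln_cell_ratio wr Lw_gt0.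
by case: (Req_dec (cell_ratio w) 1) => // /(ln_lt_sub1 ratio_gt0); nra.
Qed.

(* Expanding [p1 w * p2 w] as a double sum and summing over [w] first, the
   pair [(w1, w2)] contributes at most [L w1 * L w2 / ph w1] when [Eh w1 w2]. *)
Definition joint_mass w1 w2 := \big[Rplus/0]_(w <- r) (L w * indic (E1 w1 w && E2 w2 w)).
Definition pair_term w1 w2 := \big[Rplus/0]_(w <- r)
   (L w * (L w1 * indic (E1 w w1)) * (L w2 * indic (E2 w w2)) / (ph w * p w)).
Definition pair_bound w1 w2 := L w1 * L w2 * indic (Eh w1 w2) / ph w1.

Lemma sum_cell_ratio : \big[Rplus/0]_(w <- r) (L w * cell_ratio w) =
  \big[Rplus/0]_(w1 <- r) \big[Rplus/0]_(w2 <- r) pair_term w1 w2.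
Proof.
have expand w : L w * cell_ratio w = \big[Rplus/0]_(w1 <- r) \big[Rplus/0]_(w2 <- r)
    (L w * (L w1 * indic (E1 w w1)) * (L w2 * indic (E2 w w2)) / (ph w * p w)).
  transitivity (L w / (ph w * p w) * (p1 w * p2 w)); first by rewrite /cell_ratio /Rdiv; ring.
  rewrite [p1 w * p2 w]big_distrlr big_distrr; apply: eq_bigr => w1 _ /=.
  by rewrite big_distrr; apply: eq_bigr => w2 _ /=; rewrite /Rdiv; ring.
rewrite (eq_bigr _ (fun w _ => expand w)) exchange_big.
by apply: eq_bigr => w1 _; rewrite exchange_big.
Qed.

Lemma pair_term_joint w1 w2 :
  pair_term w1 w2 = L w1 * L w2 / (ph w1 * joint_mass w1 w2) * joint_mass w1 w2.
Proof.
have p_joint w : E1 w1 w -> E2 w2 w -> p w = joint_mass w1 w2.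
  by move=> e1 e2; apply: eq_bigr => w' _; rewrite /relI (E1trans e1) (E2trans e2).
set J := joint_mass w1 w2; rewrite {2}/J /joint_mass big_distrr; apply: eq_bigr => w _ /=.
rewrite /indic (E1sym w w1) (E2sym w w2).
case: (boolP (E1 w1 w && E2 w2 w)) => [/andP[e1 e2]|].
  by rewrite e1 e2 (p_joint w e1 e2) (mass_congr Ehtrans (E1h e1)) /J /Rdiv; ring.
by case: (E1 w1 w); case: (E2 w2 w) => //= _; rewrite /Rdiv; ring.
Qed.

Lemma joint_mass_ge0 w1 w2 : 0 <= joint_mass w1 w2.
Proof. by apply: sumR_ge0 => w _; apply: weight_indic_ge0. Qed.

Lemma joint_mass_gt0_Eh w1 w2 : 0 < joint_mass w1 w2 -> Eh w1 w2.
Proof.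
case/Rgt_not_eq/sumR_neq0=> w _; rewrite /indic.
case: (boolP (E1 w1 w && E2 w2 w)) => [/andP[e1 e2] _ | _]; last by rewrite Rmult_0_r.
by rewrite (Ehtrans (E1h e1)) (equivalence_rel_sym Eh_equiv) E2h.
Qed.

Lemma pair_bound_ge0 w1 w2 : 0 <= pair_bound w1 w2.
Proof.
rewrite /pair_bound; case: (Rle_lt_or_eq_dec _ _ (mass_ge0 Eh w1)) => [ph_gt0|<-].
  apply: Rle_mult_inv_pos; rewrite // Rmult_assoc.
  by apply: Rmult_le_pos; [exact: L_ge0 | exact: weight_indic_ge0].
by rewrite /Rdiv Rinv_0 Rmult_0_r; lra.
Qed.

Lemma pair_term_le w1 w2 : pair_term w1 w2 <= pair_bound w1 w2.
Proof.
rewrite pair_term_joint.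
case: (Rle_lt_or_eq_dec _ _ (joint_mass_ge0 w1 w2)) => [jm_gt0|<-]; last first.
  by rewrite Rmult_0_r; apply: pair_bound_ge0.
rewrite /pair_bound /indic (joint_mass_gt0_Eh jm_gt0) Rmult_1_r.
case: (Rle_lt_or_eq_dec _ _ (mass_ge0 Eh w1)) => [ph_gt0|<-]; last first.
  by rewrite Rmult_0_l /Rdiv Rinv_0; lra.
by right; field; lra.
Qed.

Lemma sum_pair_bound w1 : w1 \in r -> \big[Rplus/0]_(w2 <- r) pair_bound w1 w2 <= L w1.
Proof.
move=> w1r; rewrite /pair_bound (eq_bigr (fun w2 => L w2 * indic (Eh w1 w2) * (L w1 / ph w1)));
  last by move=> w2 _; rewrite /Rdiv; ring.
rewrite -big_distrl -/(mass Eh w1).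
case: (Rle_lt_or_eq_dec _ _ (L_ge0 w1)) => [Lw1_gt0|<-]; last first.
  by rewrite /= /Rdiv Rmult_0_l Rmult_0_r; lra.
by have := mass_gt0 (Ehrefl w1) w1r Lw1_gt0; right=> /=; field; lra.
Qed.

Lemma sum_cell_ratio_le :
  \big[Rplus/0]_(w <- r) (L w * cell_ratio w) <= \big[Rplus/0]_(w <- r) L w.
Proof.
rewrite sum_cell_ratio; apply: sumR_le => w1 w1r; apply: Rle_trans (sum_pair_bound w1r).
by apply: sumR_le => w2 _; apply: pair_term_le.
Qed.

Lemma opp_cond_info_le : - cond_info <=
  \big[Rplus/0]_(w <- r) (L w * cell_ratio w) - \big[Rplus/0]_(w <- r) L w.
Proof.
rewrite opp_cond_info /Rminus -sumRN -big_split.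
by apply: sumR_le => w wr /=; have := cond_info_term_le wr; lra.
Qed.

Lemma cond_info_ge0 : 0 <= cond_info.
Proof. by have := opp_cond_info_le; have := sum_cell_ratio_le; lra. Qed.

Section Equality.
Hypothesis cond_info_le0 : cond_info <= 0.

Lemma cell_ratio_eq1 w : w \in r -> 0 < L w -> cell_ratio w = 1.
Proof.
move=> wr Lw_gt0; apply: cond_info_term_eq => //.
pose F w := L w * (ln (p1 w) + ln (p2 w) - ln (p w) - ln (ph w)).
pose G w := L w * cell_ratio w + - L w.
have le_sum : \big[Rplus/0]_(w <- r) G w <= \big[Rplus/0]_(w <- r) F w.
  rewrite big_split sumRN -opp_cond_info /=.
  by have := sum_cell_ratio_le; have := opp_cond_info_le; lra.
exact: (@sumR_le_eq _ r F G cond_info_term_le le_sum w wr).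
Qed.

Lemma pair_term_eq w1 w2 : w1 \in r -> w2 \in r -> pair_term w1 w2 = pair_bound w1 w2.
Proof.
have sum_eq : {in r, forall v, \big[Rplus/0]_(w <- r) pair_term v w =
                               \big[Rplus/0]_(w <- r) pair_bound v w}.
  apply: sumR_le_eq => [v _|]; first by apply: sumR_le => w _; apply: pair_term_le.
  rewrite -sum_cell_ratio; apply: Rle_trans (sumR_le sum_pair_bound) _.
  by have := opp_cond_info_le; lra.
move=> w1r; apply: sumR_le_eq => [w _|]; first exact: pair_term_le.
by rewrite sum_eq //; lra.
Qed.

Lemma cell_empty_factor w : p w = 0 -> p1 w * p2 w = 0.
Proof.
move=> p0.
case: (Rle_lt_or_eq_dec _ _ (mass_ge0 E1 w)) => [p1_gt0|<-]; last by ring.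
case: (Rle_lt_or_eq_dec _ _ (mass_ge0 E2 w)) => [p2_gt0|<-]; last by ring.
have [w1 w1r [Lw1_gt0 e1]] := mass_gt0_witness p1_gt0.
have [w2 w2r [Lw2_gt0 e2]] := mass_gt0_witness p2_gt0.
have jm0 : joint_mass w1 w2 = 0.
  by rewrite -p0; apply: eq_bigr => w' _; rewrite /relI (E1trans e1) (E2trans e2).
have Eh12 : Eh w1 w2 by rewrite -(Ehtrans (E1h e1)) E2h.
have := pair_term_eq w1r w2r; rewrite pair_term_joint jm0 Rmult_0_r /pair_bound /indic Eh12.
have ph_gt0 := mass_gt0 (Ehrefl w1) w1r Lw1_gt0.
have : 0 < L w1 * L w2 * 1 / ph w1.
  by apply: Rdiv_lt_0_compat => //; rewrite Rmult_1_r; apply: Rmult_lt_0_compat.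
lra.
Qed.

Lemma cond_info0_factor w : w \in r -> p w * ph w = p1 w * p2 w.
Proof.
move=> wr; case: (Rle_lt_or_eq_dec _ _ (mass_ge0 relI w)) => [p_gt0|/esym p0]; last first.
  by rewrite p0 cell_empty_factor // Rmult_0_l.
have [w' w'r [Lw'_gt0 e12]] := mass_gt0_witness p_gt0; have /andP[e1 e2] := e12.
rewrite (mass_congr relItrans e12) (mass_congr E1trans e1) (mass_congr E2trans e2).
rewrite (mass_congr Ehtrans (E1h e1)) -[LHS]Rmult_1_r -(cell_ratio_eq1 w'r Lw'_gt0).
have := mass_gt0 (relIrefl w') w'r Lw'_gt0; have := mass_gt0 (Ehrefl w') w'r Lw'_gt0.
by rewrite /cell_ratio => ? ?; field; lra.
Qed.

End Equality.

End CondInfo.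
End Gibbs.

Section NegentRatio.
Variables (T : eqType) (r : seq T) (L : T -> R).
Hypothesis L_ge0 : forall w, 0 <= L w.
Variables A B C D : rel T.
Hypotheses (Arefl : reflexive A) (Brefl : reflexive B).
Hypotheses (Crefl : reflexive C) (Drefl : reflexive D).

Local Notation mass := (mass r L).
Local Notation negent := (negent r L).

Lemma negent_ratio3 :
  \big[Rplus/0]_(w <- r) (L w * ln (mass A w / (mass B w * mass C w))) =
  negent A - negent B - negent C.
Proof.
rewrite /negent /Rminus -!sumRN -!big_split; apply: eq_big_seq => w wr /=.
case: (Rle_lt_or_eq_dec _ _ (L_ge0 w)) => [Lw_gt0|<-]; last by ring.
have mA := mass_gt0 L_ge0 (Arefl w) wr Lw_gt0; have mB := mass_gt0 L_ge0 (Brefl w) wr Lw_gt0.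
have mC := mass_gt0 L_ge0 (Crefl w) wr Lw_gt0.
rewrite /Rdiv ln_mult ?ln_Rinv ?ln_mult; try lra; try by apply: Rmult_lt_0_compat.
by apply/Rinv_0_lt_compat/Rmult_lt_0_compat.
Qed.

Lemma negent_ratio4 :
  \big[Rplus/0]_(w <- r) (L w * ln (mass A w * mass B w / (mass C w * mass D w))) =
  negent A + negent B - negent C - negent D.
Proof.
rewrite /negent /Rminus -!sumRN -!big_split; apply: eq_big_seq => w wr /=.
case: (Rle_lt_or_eq_dec _ _ (L_ge0 w)) => [Lw_gt0|<-]; last by ring.
have mA := mass_gt0 L_ge0 (Arefl w) wr Lw_gt0; have mB := mass_gt0 L_ge0 (Brefl w) wr Lw_gt0.
have mC := mass_gt0 L_ge0 (Crefl w) wr Lw_gt0; have mD := mass_gt0 L_ge0 (Drefl w) wr Lw_gt0.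
rewrite /Rdiv ln_mult ?ln_Rinv ?ln_mult; try lra; try by apply: Rmult_lt_0_compat.
by apply/Rinv_0_lt_compat/Rmult_lt_0_compat.
Qed.

End NegentRatio.

Lemma prodR_ge0 (I : finType) (P : pred I) (F : I -> R) :
  (forall i, 0 <= F i) -> 0 <= \big[Rmult/1]_(i | P i) F i.
Proof. by move=> F0; apply: big_ind => //; [lra | move=> *; apply: Rmult_le_pos]. Qed.

Lemma prodR_gt0_factor (I : finType) (F : I -> R) i :
  (forall i, 0 <= F i) -> 0 < \big[Rmult/1]_(j : I) F j -> 0 < F i.
Proof.
move=> F0; rewrite (bigD1 i) //=; case: (Rle_lt_or_eq_dec _ _ (F0 i)) => // <-.
by rewrite Rmult_0_l; lra.
Qed.

Lemma ln_prodR (I : finType) (P : pred I) (F : I -> R) : (forall i, 0 < F i) ->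
  ln (\big[Rmult/1]_(i | P i) F i) = \big[Rplus/0]_(i | P i) ln (F i).
Proof.
move=> F_gt0; suff [] : 0 < \big[Rmult/1]_(i | P i) F i /\
    ln (\big[Rmult/1]_(i | P i) F i) = \big[Rplus/0]_(i | P i) ln (F i) by [].
apply: (big_rec2 (fun a b => 0 < a /\ ln a = b)); first by split; [lra | exact: ln_1].
by move=> i a b _ [a_gt0 <-]; split; [apply: Rmult_lt_0_compat | rewrite ln_mult].
Qed.

Lemma indic_forall (I : finType) (P : pred I) :
  indic [forall i, P i] = \big[Rmult/1]_(i : I) indic (P i).
Proof.
case: (boolP [forall i, P i]) => [/forallP allP | /forallPn [i /negbTE Pi]].
  by rewrite /indic big1 // => i _; rewrite allP.
by rewrite /indic (bigD1 i) //= Pi Rmult_0_l.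
Qed.

Lemma Xrange_eq (X : finType) (Y : eqType) k a b (x x' : inp X k) (y y' : Y) :
  (Xrange a b x' y' == Xrange a b x y) = [forall i : 'I_k, (a <= i < b)%N ==> (x' i == x i)].
Proof.
have map_eq (f g : 'I_k -> X) s :
    ([seq f i | i <- s] == [seq g i | i <- s]) = all (fun i => f i == g i) s.
  by elim: s => //= i s IH; rewrite eqseq_cons IH.
rewrite /Xrange map_eq; apply/allP/forallP => [agree i | agree i].
  by apply/implyP => abi; apply: agree; rewrite mem_filter abi mem_enum.
by rewrite mem_filter => /andP[abi _]; exact: (implyP (agree i) abi).
Qed.

Section Level.
Unset Implicit Arguments.
Variables (X : finType) (Y : eqType) (Ysupp : nat -> seq Y) (W : chan X Y).
Variables (PX : X -> R) (k : nat).
Set Implicit Arguments.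
Hypothesis PX_ge0 : forall a, 0 <= PX a.
Hypothesis W_ge0 : forall x y, 0 <= W k x y.
Implicit Types A B : pred nat.

Local Notation outcome := (inp X k * Y)%type.

Definition outcomes : seq outcome :=
  [seq (x, y) | x <- index_enum (inp X k), y <- Ysupp k].
Definition joint (w : outcome) := law PX W w.1 w.2.

Lemma joint_ge0 w : 0 <= joint w.
Proof. by apply: Rmult_le_pos; [apply: prodR_ge0 | apply: W_ge0]. Qed.

Lemma Ex_outcomes F :
  Ex Ysupp (law PX W (k:=k)) F = \big[Rplus/0]_(w <- outcomes) (joint w * F w.1 w.2).
Proof. by rewrite /outcomes big_allpairs. Qed.

Lemma Pr_outcomes E :
  Pr Ysupp (law PX W (k:=k)) E = \big[Rplus/0]_(w <- outcomes) (joint w * indic (E w.1 w.2)).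
Proof. by rewrite /Pr Ex_outcomes. Qed.

Lemma mem_outcomes x y : y \in Ysupp k -> (x, y) \in outcomes.
Proof. by move=> y_in; apply: allpairs_f => //; rewrite mem_index_enum. Qed.

Lemma outcomes_output w : w \in outcomes -> w.2 \in Ysupp k.
Proof. by case/allpairsP=> [[x y] [_ y_in ->]]. Qed.

Local Notation mass := (mass outcomes joint).
Local Notation negent := (negent outcomes joint).

Lemma MI_negent (U V : eqType) (f : inp X k -> Y -> U) (g : inp X k -> Y -> V) :
  MI Ysupp (law PX W (k:=k)) f g =
  negent (fun w w' => (f w'.1 w'.2 == f w.1 w.2) && (g w'.1 w'.2 == g w.1 w.2)) -
  negent (fun w w' => f w'.1 w'.2 == f w.1 w.2) -
  negent (fun w w' => g w'.1 w'.2 == g w.1 w.2).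
Proof.
rewrite /MI Ex_outcomes -negent_ratio3 //; try by [exact: joint_ge0 | move=> w; rewrite ?eqxx].
by apply: eq_bigr => w _; rewrite !Pr_outcomes.
Qed.

Lemma CMI_negent (U V Z : eqType) (f : inp X k -> Y -> U) (g : inp X k -> Y -> V)
    (h : inp X k -> Y -> Z) :
  CMI Ysupp (law PX W (k:=k)) f g h =
  negent (fun w w' => [&& f w'.1 w'.2 == f w.1 w.2, g w'.1 w'.2 == g w.1 w.2
                        & h w'.1 w'.2 == h w.1 w.2]) +
  negent (fun w w' => h w'.1 w'.2 == h w.1 w.2) -
  negent (fun w w' => (f w'.1 w'.2 == f w.1 w.2) && (h w'.1 w'.2 == h w.1 w.2)) -
  negent (fun w w' => (g w'.1 w'.2 == g w.1 w.2) && (h w'.1 w'.2 == h w.1 w.2)).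
Proof.
rewrite /CMI Ex_outcomes -negent_ratio4 //; try by [exact: joint_ge0 | move=> w; rewrite ?eqxx].
by apply: eq_bigr => w _; rewrite !Pr_outcomes.
Qed.

(* The classes of [agreeX A] are the values of [X_A], those of [agreeXY A]
   the values of [(X_A, Y)]. *)
Definition agreeX A (w w' : outcome) := [forall i : 'I_k, A i ==> (w'.1 i == w.1 i)].
Definition agreeXY A (w w' : outcome) := agreeX A w w' && (w'.2 == w.2).

Definition negentX A := negent (agreeX A).
Definition negentXY A := negent (agreeXY A).

Lemma agreeX_equiv A : equivalence_rel (agreeX A).
Proof.
apply/equivalence_relP; split=> [w | w1 w2 /forallP e12 w3].
  by apply/forallP => i; rewrite eqxx implybT.
apply: eq_forallb => i; case: (boolP (A i)) => //= Ai.
by rewrite (eqP (implyP (e12 i) Ai)) eq_sym.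
Qed.

Lemma agreeXY_equiv A : equivalence_rel (agreeXY A).
Proof.
have /equivalence_relP[Xrefl Xtrans] := agreeX_equiv A.
apply/equivalence_relP; split=> [w | w1 w2 /andP[/Xtrans e12 /eqP y12] w3].
  by rewrite /agreeXY Xrefl eqxx.
by rewrite /agreeXY e12 y12.
Qed.

Lemma agreeX_predU A B w w' :
  agreeX A w w' && agreeX B w w' = agreeX (fun n => A n || B n) w w'.
Proof.
apply/andP/forallP => [[/forallP eA /forallP eB] i | eAB].
  by apply/implyP => /orP[Ai|Bi]; [exact: (implyP (eA i)) | exact: (implyP (eB i))].
by split; apply/forallP => i; apply/implyP => ABi; apply: (implyP (eAB i)); rewrite ABi ?orbT.
Qed.

Lemma agreeXY_predU A B w w' :
  agreeXY A w w' && agreeXY B w w' = agreeXY (fun n => A n || B n) w w'.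
Proof. by rewrite /agreeXY -agreeX_predU andbACA andbb. Qed.

Lemma agreeX_sub A B w w' : subpred B A -> agreeX A w w' -> agreeX B w w'.
Proof.
by move=> BA /forallP eA; apply/forallP => i; apply/implyP => /BA; apply/implyP/eA.
Qed.

Lemma agreeX_pred0 w w' : agreeX pred0 w w'.
Proof. exact/forallP. Qed.

Lemma agreeX_ext A B : (forall n, (n < k)%N -> A n = B n) -> agreeX A =2 agreeX B.
Proof. by move=> eqAB w w'; apply: eq_forallb => i; rewrite eqAB. Qed.

Lemma negentX_ext A B : (forall n, (n < k)%N -> A n = B n) -> negentX A = negentX B.
Proof. by move/agreeX_ext=> eqAB; apply: negent_ext. Qed.

Lemma negentXY_ext A B : (forall n, (n < k)%N -> A n = B n) -> negentXY A = negentXY B.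
Proof. by move/agreeX_ext=> eqAB; apply: negent_ext => w w'; rewrite /agreeXY eqAB. Qed.

Lemma negentXY_supermodular A B :
  negentXY A + negentXY B <= negentXY (fun n => A n || B n) + negentXY (fun n => A n && B n).
Proof.
pose AB n := A n && B n.
have subAB C : subpred AB C -> subrel (agreeXY C) (agreeXY AB).
  by move=> sub w w' /andP[eC y]; rewrite /agreeXY y andbT (agreeX_sub sub eC).
have subA : subpred AB A by move=> n /andP[].
have subB : subpred AB B by move=> n /andP[_].
have := cond_info_ge0 outcomes joint_ge0 (agreeXY_equiv A) (agreeXY_equiv B) (agreeXY_equiv AB)
  (subAB A subA) (subAB B subB); rewrite /cond_info.
have -> : negent (relI (agreeXY A) (agreeXY B)) = negentXY (fun n => A n || B n).
  by apply: negent_ext => w w'; apply: agreeXY_predU.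
by rewrite /negentXY /AB; lra.
Qed.

Lemma joint_gt0_PX w i : 0 < joint w -> 0 < PX (w.1 i).
Proof.
move=> jw_gt0; apply: (@prodR_gt0_factor _ (fun j => PX (w.1 j))) => //.
case: (Rle_lt_or_eq_dec _ _ (@prodR_ge0 _ xpredT (fun j => PX (w.1 j)) (fun j => PX_ge0 _)))
  => [prod_gt0 | prod0]; first exact: prod_gt0.
by move: jw_gt0; rewrite /joint /law -prod0 Rmult_0_l; lra.
Qed.

(* The 0-based coordinates [a <= n < b], i.e. the inputs [X_[a+1:b]]. *)
Definition segment (a b : nat) : pred nat := fun n => (a <= n < b)%N.

Lemma segmentnn a n : segment a a n = false.
Proof. by rewrite /segment; apply/negbTE; lia. Qed.

Lemma agreeX_segment a b w w' :
  agreeX (segment a b) w w' = (Xrange a b w'.1 w'.2 == Xrange a b w.1 w.2).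
Proof. by rewrite Xrange_eq. Qed.

Section Independence.
Hypothesis PX_sum1 : \big[Rplus/0]_(a : X) PX a = 1.
Hypothesis W_sum1 : forall x, sumY (Ysupp k) (W k x) = 1.

Lemma mass_agreeX A w : mass (agreeX A) w = \big[Rmult/1]_(i : 'I_k | A i) PX (w.1 i).
Proof.
rewrite /mass /outcomes big_allpairs.
transitivity (\big[Rplus/0]_(x : inp X k)
    \big[Rmult/1]_(i : 'I_k) (PX (x i) * indic (A i ==> (x i == w.1 i)))).
  apply: eq_bigr => x _; rewrite big_split /= -indic_forall.
  transitivity ((\big[Rmult/1]_(i : 'I_k) PX (x i)) *
                indic [forall i : 'I_k, A i ==> (x i == w.1 i)] * sumY (Ysupp k) (W k x)).
    rewrite /sumY big_distrr; apply: eq_bigr => y _; rewrite /joint /law /agreeX /=.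
    by rewrite Rmult_assoc [W k x y * _]Rmult_comm -Rmult_assoc.
  by rewrite W_sum1 Rmult_1_r.
transitivity (\big[Rmult/1]_(i : 'I_k)
    \big[Rplus/0]_(a : X) (PX a * indic (A i ==> (a == w.1 i)))); first by rewrite bigA_distr_bigA.
rewrite [RHS]big_mkcond; apply: eq_bigr => i _ /=.
case: (A i) => /=; last by rewrite -[RHS]PX_sum1; apply: eq_bigr => a _; rewrite /indic Rmult_1_r.
rewrite (bigD1 (w.1 i)) //= eqxx /indic Rmult_1_r big1 ?Rplus_0_r // => a /negbTE->.
exact: Rmult_0_r.
Qed.

Definition negent_coord (i : 'I_k) :=
  \big[Rplus/0]_(w <- outcomes) (joint w * ln (PX (w.1 i))).

(* This is where the independence of the inputs enters. *)
Lemma negentX_sum A : negentX A = \big[Rplus/0]_(i : 'I_k | A i) negent_coord i.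
Proof.
rewrite /negentX /negent /negent_coord -exchange_big; apply: eq_big_seq => w wr.
rewrite mass_agreeX -big_distrr /=.
case: (Rle_lt_or_eq_dec _ _ (joint_ge0 w)) => [jw_gt0|<-]; last by rewrite !Rmult_0_l.
by congr (_ * _); apply: ln_prodR => i; apply: joint_gt0_PX.
Qed.

Lemma negentX_modular A B :
  negentX (fun n => A n || B n) + negentX (fun n => A n && B n) = negentX A + negentX B.
Proof.
rewrite !negentX_sum [X in X + _ = _]big_mkcond [X in _ + X = _]big_mkcond.
rewrite [X in _ = X + _]big_mkcond [X in _ = _ + X]big_mkcond -!big_split.
apply: eq_bigr => i _ /=.
by case: (A i); case: (B i) => /=; ring.
Qed.

Lemma negentX_pred0 : negentX pred0 = 0.
Proof. by rewrite negentX_sum big_pred0. Qed.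

End Independence.

Lemma Pr_agreeXY a b x y :
  Pr Ysupp (law PX W (k:=k))
     (fun x' y' => (Xrange a b x' y' == Xrange a b x y) && (y' == y)) =
  mass (agreeXY (segment a b)) (x, y).
Proof. by rewrite Pr_outcomes; apply: eq_bigr => w _; rewrite /agreeXY agreeX_segment. Qed.

Lemma Pr_output x y :
  Pr Ysupp (law PX W (k:=k)) (fun x' y' => y' == y) = mass (agreeXY pred0) (x, y).
Proof. by rewrite Pr_outcomes; apply: eq_bigr => w _; rewrite /agreeXY agreeX_pred0. Qed.

Lemma agreeX_segment_cat m w w' : (m <= k)%N ->
  agreeX (segment 0 m) w w' && agreeX (segment m k) w w' = agreeX (segment 0 k) w w'.
Proof.
move=> le_mk; rewrite agreeX_predU; apply: agreeX_ext => n lt_nk.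
by rewrite /segment; apply/idP/idP; lia.
Qed.

Lemma agreeXY_segment_cat m w w' : (m <= k)%N ->
  relI (agreeXY (segment 0 m)) (agreeXY (segment m k)) w w' = agreeXY (segment 0 k) w w'.
Proof. by move=> le_mk; rewrite /relI /agreeXY andbACA andbb agreeX_segment_cat. Qed.

Lemma MI_segment m :
  MI Ysupp (law PX W (k:=k)) (Xrange 0 m) (@Yout X Y k) =
  negentXY (segment 0 m) - negentX (segment 0 m) - negentXY pred0.
Proof.
rewrite MI_negent; congr (_ - _ - _); apply: negent_ext => w w'.
- by rewrite /agreeXY agreeX_segment.
- by rewrite agreeX_segment.
- by rewrite /agreeXY agreeX_pred0.
Qed.

Lemma CMI_segments m : (m <= k)%N ->
  CMI Ysupp (law PX W (k:=k)) (Xrange 0 m) (@Yout X Y k) (Xrange m k) =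
  negentXY (segment 0 k) + negentX (segment m k) - negentX (segment 0 k) - negentXY (segment m k).
Proof.
move=> le_mk; rewrite CMI_negent.
congr (_ + _ - _ - _); apply: negent_ext => w w'; rewrite /agreeXY -!agreeX_segment //.
- by rewrite andbCA agreeX_segment_cat // andbC.
- by rewrite agreeX_segment_cat.
- by rewrite andbC.
Qed.

(* Equality in the Gibbs inequality for the partitions by [X_[m]], [X_[m+1:k]]
   and [Y] is conditional independence of [X_[m]] and [X_[m+1:k]] given [Y]. *)
Lemma cond_indep_of_negentXY m : (m <= k)%N ->
  negentXY (segment 0 k) + negentXY pred0 - negentXY (segment 0 m) - negentXY (segment m k) <= 0 ->
  forall (x : inp X k) (y : Y),
    let L := law PX W (k:=k) in
    let py := Pr Ysupp L (fun x' y' => y' == y) in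
    0 < py ->
    Pr Ysupp L (fun x' y' => (Xrange 0 k x' y' == Xrange 0 k x y) && (y' == y)) / py =
    (Pr Ysupp L (fun x' y' => (Xrange 0 m x' y' == Xrange 0 m x y) && (y' == y)) / py) *
    (Pr Ysupp L (fun x' y' => (Xrange m k x' y' == Xrange m k x y) && (y' == y)) / py).
Proof.
move=> le_mk info_le0 x y L py py_gt0.
rewrite /py (Pr_output x) !Pr_agreeXY in py_gt0 *; apply: Rdiv_factor => //.
have y_in : y \in Ysupp k.
  have [w' w'_in [_ /andP[_ /eqP /= <-]]] := mass_gt0_witness joint_ge0 py_gt0.
  exact: outcomes_output.
have sub0 a b : subrel (agreeXY (segment a b)) (agreeXY pred0).
  by move=> w w' /andP[_ y_eq]; rewrite /agreeXY agreeX_pred0.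
have info0 : cond_info outcomes joint
    (agreeXY (segment 0 m)) (agreeXY (segment m k)) (agreeXY pred0) <= 0.
  rewrite /cond_info (@negent_ext _ _ _ _ (agreeXY (segment 0 k))) //.
  by move=> w w'; apply: agreeXY_segment_cat.
have -> : mass (agreeXY (segment 0 k)) (x, y) =
          mass (relI (agreeXY (segment 0 m)) (agreeXY (segment m k))) (x, y).
  by apply: eq_bigr => w _; rewrite agreeXY_segment_cat.
exact: (cond_info0_factor joint_ge0 (agreeXY_equiv _) (agreeXY_equiv _) (agreeXY_equiv _)
  (sub0 0%N m) (sub0 m k) info0 (mem_outcomes x y_in)).
Qed.

Section Permutation.
Hypothesis W_perm : forall (sigma : {perm 'I_k}) (x : inp X k) (y : Y),
  W k [ffun i => x (sigma i)] y = W k x y.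
Variable s : {perm 'I_k}.

Definition perm_outcome (w : outcome) : outcome := ([ffun i => w.1 (s i)], w.2).

Lemma sum_outcomes_perm (G : outcome -> R) :
  \big[Rplus/0]_(w <- outcomes) G w = \big[Rplus/0]_(w <- outcomes) G (perm_outcome w).
Proof.
have perm_inp_bij : bijective (fun x : inp X k => [ffun i => x (s i)]).
  exists (fun x : inp X k => [ffun i => x ((s^-1)%g i)]) => x;
  by apply/ffunP => i; rewrite !ffunE ?permKV ?permK.
rewrite /outcomes !big_allpairs (reindex _ (onW_bij _ perm_inp_bij)).
by apply: eq_bigr => x _; apply: eq_bigr.
Qed.

Lemma joint_perm w : joint (perm_outcome w) = joint w.
Proof.
rewrite /joint /law /= W_perm; congr (_ * _).
by rewrite [RHS](reindex_inj (@perm_inj _ s)); apply: eq_bigr => i _; rewrite ffunE.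
Qed.

Lemma negent_perm E :
  negent E = negent (fun a b => E (perm_outcome a) (perm_outcome b)).
Proof.
rewrite /negent (sum_outcomes_perm); apply: eq_bigr => w _; rewrite joint_perm.
by congr (_ * ln _); rewrite /mass sum_outcomes_perm; apply: eq_bigr => w' _; rewrite joint_perm.
Qed.

Lemma agreeX_perm A A' w w' : (forall i : 'I_k, A' (s i) = A i) ->
  agreeX A (perm_outcome w) (perm_outcome w') = agreeX A' w w'.
Proof.
move=> AA'; apply/forallP/forallP => [agree j | agree i]; last first.
  by rewrite /= !ffunE -AA'; apply: agree.
by rewrite -(permKV s j) AA'; have := agree ((s^-1)%g j); rewrite /= !ffunE.
Qed.

Lemma negentX_perm A A' : (forall i : 'I_k, A' (s i) = A i) -> negentX A = negentX A'.
Proof.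
by move=> AA'; rewrite /negentX negent_perm; apply: negent_ext => w w'; apply: agreeX_perm.
Qed.

Lemma negentXY_perm A A' : (forall i : 'I_k, A' (s i) = A i) -> negentXY A = negentXY A'.
Proof.
move=> AA'; rewrite /negentXY negent_perm; apply: negent_ext => w w'.
by rewrite /agreeXY (agreeX_perm _ _ AA').
Qed.

End Permutation.
End Level.

Lemma sum_restrict_support (Z : eqType) (Ss Sk : seq Z) (a b G : Z -> R) :
  uniq Ss -> uniq Sk -> (forall y, 0 <= a y) -> (forall y, y \notin Sk -> a y = 0) ->
  {in Ss, b =1 a} ->
  \big[Rplus/0]_(y <- Sk) a y = 1 -> \big[Rplus/0]_(y <- Ss) b y = 1 ->
  \big[Rplus/0]_(y <- Sk) (a y * G y) = \big[Rplus/0]_(y <- Ss) (b y * G y).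
Proof.
move=> uSs uSk a_ge0 a_out ba sum_a sum_b.
have swap (F : Z -> R) :
    \big[Rplus/0]_(y <- Sk | y \in Ss) F y = \big[Rplus/0]_(y <- Ss | y \in Sk) F y.
  rewrite -big_filter -[RHS]big_filter; apply/perm_big/uniq_perm; rewrite ?filter_uniq //.
  by move=> y; rewrite !mem_filter andbC.
have drop_out (F : Z -> R) : (forall y, y \notin Sk -> F y = 0) ->
    \big[Rplus/0]_(y <- Ss | y \in Sk) F y = \big[Rplus/0]_(y <- Ss) F y.
  by move=> F_out; rewrite [RHS](bigID (mem Sk)) /= [X in _ = _ + X]big1 ?Rplus_0_r // => y /F_out.
have a_in_Ss : \big[Rplus/0]_(y <- Sk | y \in Ss) a y = 1.
  by rewrite swap drop_out // -sum_b; apply: eq_big_seq => y /ba.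
have a_off_Ss : {in Sk, forall y, y \notin Ss -> a y = 0}.
  have sum0 : \big[Rplus/0]_(y <- Sk) (if y \notin Ss then a y else 0) = 0.
    by move: sum_a; rewrite (bigID (mem Ss)) /= a_in_Ss big_mkcond /=; lra.
  move=> y ySk yNSs.
  have le0 : {in Sk, forall v, 0 <= if v \notin Ss then a v else 0}.
    by move=> v _; case: ifP => _; [apply: a_ge0 | lra].
  have ge0 : \big[Rplus/0]_(v <- Sk) (if v \notin Ss then a v else 0) <=
             \big[Rplus/0]_(v <- Sk) 0 by rewrite sum0 big1 //; lra.
  by have := sumR_le_eq le0 ge0 ySk; rewrite yNSs.
rewrite (bigID (mem Ss)) /= [X in _ + X]big1_seq ?Rplus_0_r; last first.
  by move=> y /andP[yNSs ySk]; rewrite a_off_Ss // Rmult_0_l.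
by rewrite swap drop_out => [|y /a_out->]; [apply: eq_big_seq => y /ba-> | rewrite Rmult_0_l].
Qed.

Section Padding.
Unset Implicit Arguments.
Variables (X : finType) (Y : eqType) (Ysupp : nat -> seq Y) (W : chan X Y).
Variables (PX : X -> R) (x0 : X) (s k : nat).
Set Implicit Arguments.
Hypothesis le_sk : (s <= k)%N.

Let tail_set (i : 'I_k) := (s <= i)%N.
Let silence : inp X k := [ffun => x0].

Definition trunc (x : inp X k) : inp X s := [ffun j => x (widen_ord le_sk j)].

Lemma trunc_pad (z : inp X s) : trunc (pad x0 k z) = z.
Proof. by apply/ffunP => j; rewrite !ffunE /= valK. Qed.

Lemma pad_silent (z : inp X s) : [forall i, tail_set i ==> (pad x0 k z i == silence i)].
Proof.
by apply/forallP => i; apply/implyP => le_si; rewrite !ffunE insubN // -leqNgt.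
Qed.

Lemma pad_trunc (x : inp X k) :
  [forall i, tail_set i ==> (x i == silence i)] -> pad x0 k (trunc x) = x.
Proof.
move/forallP=> x_silent; apply/ffunP => i; rewrite ffunE.
case: insubP => [j _ ij | lt_si]; first by rewrite ffunE; congr (x _); apply: val_inj.
by have := implyP (x_silent i); rewrite /tail_set ffunE leqNgt lt_si => /(_ isT) /eqP.
Qed.

Lemma sum_silent_tail (G : inp X k -> R) :
  \big[Rplus/0]_(x : inp X k) (indic [forall i, tail_set i ==> (x i == silence i)] * G x) =
  \big[Rplus/0]_(z : inp X s) G (pad x0 k z).
Proof.
transitivity (\big[Rplus/0]_(x : inp X k | [forall i, tail_set i ==> (x i == silence i)]) G x).
  by rewrite [RHS]big_mkcond; apply: eq_bigr => x _; rewrite /indic; case: ifP => _; ring.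
rewrite (reindex_onto (pad x0 k) trunc) /=; last exact: pad_trunc.
by apply: eq_bigl => z; rewrite pad_silent trunc_pad eqxx.
Qed.

Lemma prod_pad (z : inp X s) :
  \big[Rmult/1]_(i : 'I_k | ~~ tail_set i) PX (pad x0 k z i) = \big[Rmult/1]_(j : 'I_s) PX (z j).
Proof.
pose F n := PX (if @insub nat (fun n => (n < s)%N) 'I_s n is Some j then z j else x0).
transitivity (\big[Rmult/1]_(i < k | (i < s)%N) F i).
  by apply: eq_big => [i | i _]; [rewrite /tail_set -ltnNge | rewrite ffunE].
by rewrite -big_ord_widen //; apply: eq_bigr => j _; rewrite /F valK.
Qed.

Hypotheses (uniq_s : uniq (Ysupp s)) (uniq_k : uniq (Ysupp k)).
Hypothesis W_ge0 : forall x y, 0 <= W k x y.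
Hypothesis W_out : forall x y, y \notin Ysupp k -> W k x y = 0.
Hypothesis W_sum1_s : forall x, sumY (Ysupp s) (W s x) = 1.
Hypothesis W_sum1_k : forall x, sumY (Ysupp k) (W k x) = 1.
Hypothesis W_reduce : forall (z : inp X s) y, y \in Ysupp s -> W s z y = W k (pad x0 k z) y.

(* Conditioning the last [k - s] inputs on silence reduces the [k]-th channel
   to the [s]-th one. *)
Lemma Ex_claw F : Ex Ysupp (claw PX W tail_set silence) F =
  Ex Ysupp (law PX W (k:=s)) (fun z y => F (pad x0 k z) y).
Proof.
rewrite /Ex /sumX.
transitivity (\big[Rplus/0]_(x : inp X k)
   (indic [forall i, tail_set i ==> (x i == silence i)] *
    ((\big[Rmult/1]_(i : 'I_k | ~~ tail_set i) PX (x i)) *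
     \big[Rplus/0]_(y <- Ysupp k) (W k x y * F x y)))).
  apply: eq_bigr => x _; rewrite /sumY !big_distrr; apply: eq_bigr => y _ /=.
  rewrite /claw /indic; case: ifP => _; last by rewrite !(Rmult_0_l, Rmult_0_r).
  by rewrite Rmult_1_l Rmult_1_r Rmult_assoc; reflexivity.
rewrite sum_silent_tail; apply: eq_bigr => z _; rewrite prod_pad /sumY.
have W_restrict : {in Ysupp s, W s z =1 W k (pad x0 k z)} by move=> y /W_reduce.
rewrite (@sum_restrict_support _ _ _ _ _ _ uniq_s uniq_k (W_ge0 _) (W_out _) W_restrict
  (W_sum1_k _) (W_sum1_s z)).
by rewrite big_distrr; apply: eq_bigr => y _ /=; rewrite /law Rmult_assoc.
Qed.

Lemma MI_claw :
  MI Ysupp (claw PX W tail_set silence) (Xrange 0 s) (@Yout X Y k) = Ik Ysupp PX W s.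
Proof.
have Xrange_pad (z z' : inp X s) (y y' : Y) :
    (Xrange 0 s (pad x0 k z') y' == Xrange 0 s (pad x0 k z) y) =
    (Xrange 0 s z' y' == Xrange 0 s z y).
  rewrite !Xrange_eq; apply/forallP/forallP => agree j.
    by have := agree (widen_ord le_sk j); rewrite !ffunE /= valK.
  apply/implyP => /andP[_ lt_js]; rewrite !ffunE; case: insubP => [u _ _ | ]; last by rewrite lt_js.
  by have := agree u; rewrite /= ltn_ord.
rewrite /Ik /MI Ex_claw; apply: eq_bigr => z _; apply: eq_bigr => y _; rewrite /Pr !Ex_claw.
by congr (_ * ln (_ / (_ * _))); apply: eq_bigr => z' _; apply: eq_bigr => y' _; rewrite Xrange_pad.
Qed.

End Padding.

Section DiscreteConvexity.
Variables (F : nat -> R) (k : nat).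
Hypothesis F_convex : forall j, (1 <= j)%N -> (j < k)%N -> 2 * F j <= F j.+1 + F j.-1.

Let incr j := F j - F j.-1.

Lemma incr_mono i j : (1 <= i)%N -> (i <= j)%N -> (j <= k)%N -> incr i <= incr j.
Proof.
move=> le1i; elim: j => [|j IH] le_ij le_jk; first lia.
case: (ltnP i j.+1) => [lt_ij | ]; last by move=> le_ji; rewrite (_ : i = j.+1); [lra | lia].
have := IH ltac:(lia) ltac:(lia); have := @F_convex j ltac:(lia) ltac:(lia).
by rewrite /incr /=; lra.
Qed.

Lemma chord_le_incr a b : (1 <= a)%N -> (a <= b)%N -> (b <= k)%N ->
  F b - F a <= INR (b - a) * incr b.
Proof.
move=> le1a; elim: b => [|b IH] le_ab le_bk; first lia.
case: (ltnP a b.+1) => [lt_ab | le_ba]; last first.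
  by rewrite (_ : a = b.+1) ?subnn /=; [lra | lia].
have := IH ltac:(lia) ltac:(lia); have := @incr_mono b b.+1 ltac:(lia) ltac:(lia) le_bk.
rewrite (_ : (b.+1 - a = (b - a).+1)%N); last lia.
by rewrite S_INR /incr /= => ? ?; have := pos_INR (b - a); nra.
Qed.

Lemma chord_ge_incr a b : (a <= b)%N -> (b <= k)%N ->
  INR (b - a) * incr a.+1 <= F b - F a.
Proof.
elim: b => [|b IH] le_ab le_bk; first by rewrite (_ : a = 0%N) /=; [lra | lia].
case: (ltnP a b.+1) => [lt_ab | le_ba]; last first.
  by rewrite (_ : a = b.+1) ?subnn /=; [lra | lia].
have := IH ltac:(lia) ltac:(lia); have := @incr_mono a.+1 b.+1 ltac:(lia) ltac:(lia) le_bk.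
rewrite (_ : (b.+1 - a = (b - a).+1)%N); last lia.
by rewrite S_INR /incr /= => ? ?; have := pos_INR (b - a); nra.
Qed.

Lemma convex_slope_lt s : (1 <= s)%N -> (s < k)%N -> F k.-1 + F 1 < F k + F 0 ->
  INR s * (F k - F 0) < INR k * (F k - F (k - s)).
Proof.
move=> le1s lt_sk strict; set m := (k - s)%N.
have head := @chord_le_incr 1 m (leqnn 1) ltac:(lia) ltac:(lia).
have tail := @chord_ge_incr m k.-1 ltac:(lia) ltac:(lia).
have incr1m := @incr_mono 1 m (leqnn 1) ltac:(lia) ltac:(lia).
have incrmk := @incr_mono m k ltac:(lia) ltac:(lia) (leqnn k).
have incrm1 : (INR s - 1) * incr m <= (INR s - 1) * incr m.+1.
  apply: Rmult_le_compat_l; first by have /= := le_INR 1 s ltac:(lia); lra.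
  exact: (@incr_mono m m.+1 ltac:(lia) ltac:(lia) ltac:(lia)).
have -> : INR k = INR s + INR m by rewrite -plus_INR; congr INR; lia.
have Em1 : INR (m - 1) = INR m - 1 by rewrite minus_INR /=; lia || lra.
have Es1 : INR (k.-1 - m) = INR s - 1.
  by rewrite (_ : (k.-1 - m = s - 1)%N) ?minus_INR /=; lia || lra.
have /= := le_INR 1 m ltac:(lia).
have /= := le_INR 1 s ltac:(lia).
have incr1k : incr 1 < incr k by rewrite /incr /=; lra.
have incrk : F k - F k.-1 = incr k by [].
have incr1 : F 1 - F 0 = incr 1 by [].
rewrite Em1 in head; rewrite Es1 in tail; nra.
Qed.

End DiscreteConvexity.

Lemma tperm_relabel k (a b : 'I_k) (A A' : pred nat) :
  A' b = A a -> A' a = A b -> (forall i : 'I_k, i != a -> i != b -> A' i = A i) ->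
  forall i, A' (tperm a b i) = A i.
Proof.
by move=> ab ba elsewhere i; case: tpermP => [->|->|/eqP ia /eqP ib] //; apply: elsewhere.
Qed.

Section CondEntropy.
Unset Implicit Arguments.
Variables (X : finType) (Y : eqType) (Ysupp : nat -> seq Y) (W : chan X Y).
Variables (PX : X -> R) (k : nat).
Set Implicit Arguments.
Hypothesis PX_ge0 : forall a, 0 <= PX a.
Hypothesis PX_sum1 : \big[Rplus/0]_(a : X) PX a = 1.
Hypothesis W_ge0 : forall x y, 0 <= W k x y.
Hypothesis W_sum1 : forall x, sumY (Ysupp k) (W k x) = 1.
Hypothesis W_perm : forall (sigma : {perm 'I_k}) (x : inp X k) (y : Y),
  W k [ffun i => x (sigma i)] y = W k x y.
Implicit Types A B : pred nat.

Local Notation negentX := (negentX Ysupp W PX k).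
Local Notation negentXY := (negentXY Ysupp W PX k).

(* Minus the conditional entropy [H(Y | X_A)]; by permutation invariance it
   only depends on [#|A|], through [negHY_prefix]. *)
Definition negHY_X A := negentXY A - negentX A.
Definition negHY_prefix j := negHY_X (segment 0 j).

Local Notation F := negHY_prefix.

Lemma negHY_X_ext A B : (forall n, (n < k)%N -> A n = B n) -> negHY_X A = negHY_X B.
Proof.
by move=> eqAB; rewrite /negHY_X (negentXY_ext Ysupp W PX eqAB) (negentX_ext Ysupp W PX eqAB).
Qed.

Lemma negHY_X_perm (s : {perm 'I_k}) A A' :
  (forall i : 'I_k, A' (s i) = A i) -> negHY_X A = negHY_X A'.
Proof.
move=> AA'; rewrite /negHY_X (negentXY_perm Ysupp PX W_perm AA').
by rewrite (negentX_perm Ysupp PX W_perm AA').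
Qed.

Lemma negHY_X_supermodular A B :
  negHY_X A + negHY_X B <= negHY_X (fun n => A n || B n) + negHY_X (fun n => A n && B n).
Proof.
have := negentXY_supermodular Ysupp PX_ge0 W_ge0 A B.
by have := negentX_modular PX_ge0 W_ge0 PX_sum1 W_sum1 A B; rewrite /negHY_X; lra.
Qed.

Lemma negHY_prefix0 : F 0 = negentXY pred0.
Proof.
have seg00 n : (n < k)%N -> segment 0 0 n = pred0 n by rewrite segmentnn.
rewrite /negHY_prefix /negHY_X (negentXY_ext Ysupp W PX seg00) (negentX_ext Ysupp W PX seg00).
by rewrite (negentX_pred0 PX_ge0 W_ge0 PX_sum1 W_sum1) Rminus_0_r.
Qed.

Lemma Ik_prefix : Ik Ysupp PX W k = F k - F 0.
Proof.
by rewrite /Ik (MI_segment Ysupp PX_ge0 W_ge0) negHY_prefix0 /negHY_prefix /negHY_X; ring.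
Qed.

(* Supermodularity applied to [A = [0, j)] and [B = [0, j-1) + {j}], where
   [B] is [A] with [j-1] and [j] swapped. *)
Lemma negHY_prefix_convex j : (1 <= j)%N -> (j < k)%N -> 2 * F j <= F j.+1 + F j.-1.
Proof.
move=> le1j lt_jk; have lt_j1k : (j.-1 < k)%N by lia.
pose B n := (n < j.-1)%N || (n == j).
have AcupB : negHY_X (fun n => segment 0 j n || B n) = F j.+1.
  by apply: negHY_X_ext => n _; rewrite /segment /B; apply/idP/idP; lia.
have AcapB : negHY_X (fun n => segment 0 j n && B n) = F j.-1.
  by apply: negHY_X_ext => n _; rewrite /segment /B; apply/idP/idP; lia.
have := negHY_X_supermodular (segment 0 j) B; rewrite AcupB AcapB.
rewrite -(@negHY_X_perm (tperm (Ordinal lt_j1k) (Ordinal lt_jk)) (segment 0 j)).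
  by rewrite /negHY_prefix; lra.
apply: tperm_relabel; rewrite /segment /B /= ?eqxx; try by apply/idP/idP; lia.
by move=> i; rewrite -!val_eqE /= => ij1 ij; apply/idP/idP; lia.
Qed.

Lemma negHY_suffix s : (s <= k)%N -> negHY_X (segment s k) = F (k - s).
Proof.
move=> le_sk; apply: (@negHY_X_perm (perm (@rev_ord_inj k))) => i.
by rewrite permE /segment /=; have := ltn_ord i; lia.
Qed.

Lemma CMI_prefix_suffix s : (s <= k)%N ->
  CMI Ysupp (law PX W (k:=k)) (Xrange 0 s) (@Yout X Y k) (Xrange s k) = F k - F (k - s).
Proof.
move=> le_sk; rewrite (CMI_segments Ysupp PX_ge0 W_ge0 le_sk) -negHY_suffix //.
by rewrite /negHY_prefix /negHY_X; ring.
Qed.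

Lemma negHY_prefix_strict K : interference Ysupp K PX W -> inK K k -> (2 <= k)%N ->
  F k.-1 + F 1 < F k + F 0.
Proof.
move=> interf inK_k le2k; apply: Rnot_le_lt => not_strict.
apply: (interf k k.-1 k inK_k) => //; try lia.
apply: (cond_indep_of_negentXY PX_ge0 W_ge0 (leq_pred k)).
have F1 : F 1 = negHY_X (segment k.-1 k).
  by rewrite negHY_suffix ?leq_pred // (_ : (k - k.-1 = 1)%N) //; lia.
have X_cat := negentX_modular PX_ge0 W_ge0 PX_sum1 W_sum1 (segment 0 k.-1) (segment k.-1 k).
have cup : negentX (fun n => segment 0 k.-1 n || segment k.-1 k n) = negentX (segment 0 k).
  by apply: negentX_ext => n lt_nk; rewrite /segment; apply/idP/idP; lia.
have cap : negentX (fun n => segment 0 k.-1 n && segment k.-1 k n) = 0.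
  rewrite -(negentX_pred0 PX_ge0 W_ge0 PX_sum1 W_sum1).
  by apply: negentX_ext => n _; rewrite /segment; apply/negbTE; lia.
rewrite cup cap in X_cat.
move: not_strict; rewrite F1 negHY_prefix0 /negHY_prefix /negHY_X; lra.
Qed.

End CondEntropy.

Theorem lemma1 (X : finType) (Y : eqType) (x0 : X) (K : option nat)
  (Ysupp : nat -> seq Y) (W : chan X Y) (PX : X -> R) :
  is_RAC Ysupp W ->
  perm_invariant K W ->
  reducible K x0 Ysupp W ->
  is_dist PX ->
  friendly Ysupp K x0 PX W ->
  interference Ysupp K PX W ->
  forall s k : nat, (1 <= s)%N -> (s < k)%N -> inK K k ->
    Rlt (Rdiv (Ik Ysupp PX W k) (INR k)) (Rdiv (Ik Ysupp PX W s) (INR s)).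
Proof.
move=> RAC W_perm W_reduce [PX_ge0 PX_sum1] friend interf s k le1s lt_sk inK_k.
have le_sk : (s <= k)%N by lia.
have [[uniq_k W_k] [uniq_s W_s]] := (RAC k, RAC s).
have W_ge0 x y : 0 <= W k x y by have [ge0 _] := W_k x.
have W_out x y : y \notin Ysupp k -> W k x y = 0 by have [_ [out _]] := W_k x; apply: out.
have W_sum1 x : sumY (Ysupp k) (W k x) = 1 by have [_ [_ sum1]] := W_k x.
have W_sum1_s x : sumY (Ysupp s) (W s x) = 1 by have [_ [_ sum1]] := W_s x.
have W_perm_k := W_perm k inK_k.
have bound := friend s k le_sk inK_k.
rewrite (MI_claw PX le_sk uniq_s uniq_k W_ge0 W_out W_sum1_s W_sum1 (W_reduce s k lt_sk inK_k))
  (CMI_prefix_suffix Ysupp PX_ge0 W_ge0 W_perm_k le_sk) in bound.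
have := convex_slope_lt (negHY_prefix_convex PX_ge0 PX_sum1 W_ge0 W_sum1 W_perm_k) le1s lt_sk
  (negHY_prefix_strict PX_ge0 PX_sum1 W_ge0 W_sum1 W_perm_k interf inK_k ltac:(lia)).
rewrite -(Ik_prefix PX_ge0 PX_sum1 W_ge0 W_sum1) => slope.
have k_gt0 : 0 < INR k by apply: lt_0_INR; lia.
apply: Rdiv_lt_cross => //; first by apply: lt_0_INR; lia.
by apply: Rlt_le_trans slope _; apply: Rmult_le_compat_l; lra.
Qed.
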